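(* Let $d\ge2$, $0<4\gamma<\epsilon<\tfrac12$, $L>0$ and $\delta=1/L$. Let $\sigma\in\{-1,1\}^d$ and let $\mathbf{p}\in\mathrm{Gol}^{\triangle}_d(L)$ satisfy $\mathbf{v}_\sigma(\delta)^T\mathbf{p}=1$ and $\mathbf{v}_\tau(\delta)^T\mathbf{p}<1$ for all $\tau\ne\sigma$. Then $\mathbf{p}$ can be written as a convex combination of exactly $d$ vertices, namely $\mathbf{p}=\sum_{k=1}^d\alpha_{(k,\sigma_k)}\mathbf{w}_{(k,\sigma_k)}(L)$ with $\sum_{k=1}^d\alpha_{(k,\sigma_k)}=1$ and $\alpha_{(k,\sigma_k)}>0$ for all $k$; moreover, this convex combination is the unique convex combination of the $2d$ points $\mathbf{w}_{(k,s)}(L)$, $k\in\{1,\dots,d\}$, $s\in\{-1,1\}$, that equals $\mathbf{p}$.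
   Context: Goldfarb cube: $\mathrm{Gol}_d=\{\mathbf{x}\in\mathbb{R}^d:-z_k\le x_k\le z_k,\ 1\le k\le d\}$ with $z_1=1$, $z_2=1-\epsilon-\epsilon x_1$, $z_k=1-\epsilon+\epsilon\gamma-\epsilon(x_{k-1}-\gamma x_{k-2})$ ($k\ge3$); it is a full-dimensional polytope with origin in its interior, with $2d$ facets (one per inequality) and $2^d$ distinct vertices $\mathbf{v}_\sigma$, $\sigma\in\{-1,1\}^d$, where $\mathbf{v}_\sigma$ is the point at which, for each $k$, $x_k\le z_k$ (if $\sigma_k=1$) resp. $-z_k\le x_k$ (if $\sigma_k=-1$) is tight; $\mathbf{v}_\sigma$ lies on exactly these $d$ facets. For $(k,s)\in\{1,\dots,d\}\times\{-1,1\}$, $\mathbf{w}_{(k,s)}$ is the unique vector such that the inequality $x_k\le z_k$ (for $s=1$) or $-z_k\le x_k$ (for $s=-1$) is equivalent to $\mathbf{w}_{(k,s)}^T\mathbf{x}\le1$; explicitly $\mathbf{w}_{(1,s)}=s\mathbf{e}_1$, $\mathbf{w}_{(2,s)}=(\epsilon\mathbf{e}_1+s\mathbf{e}_2)/(1-\epsilon)$, $\mathbf{w}_{(k,s)}=(-\epsilon\gamma\mathbf{e}_{k-2}+\epsilon\mathbf{e}_{k-1}+s\mathbf{e}_k)/(1-\epsilon+\epsilon\gamma)$ for $k\ge3$. The dual Goldfarb cube $\mathrm{Gol}^{\triangle}_d:=\{\mathbf{x}:\mathbf{v}_\tau^T\mathbf{x}\le1\ \forall\tau\}$ is the convex hull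 of the $2d$ points $\mathbf{w}_{(k,s)}$, which are its vertices. Stretching: $\mathbf{x}(t):=(tx_1,\dots,tx_{d-2},x_{d-1},x_d)^T$; $\mathrm{Gol}^{\triangle}_d(L):=\{\mathbf{x}(L):\mathbf{x}\in\mathrm{Gol}^{\triangle}_d\}=\mathrm{conv}\{\mathbf{w}_{(k,s)}(L)\}=\{\mathbf{x}:\mathbf{v}_\tau(1/L)^T\mathbf{x}\le1\ \forall\tau\}$. *)

(* Points of R^d are row vectors 'rV[R]_d, coordinates are
   0-based: coordinate x_k of the paper is x 0 (k-1). *)
From HB Require Import structures.
From mathcomp Require Import all_boot all_order all_algebra.
Set Implicit Arguments. Unset Strict Implicit. Unset Printing Implicit Defensive.
Import Order.TTheory GRing.Theory Num.Theory.
Local Open Scope ring_scope.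

Section Goldfarb.
Variables (R : realFieldType) (d : nat) (eps gam : R).

Definition sgb (b : bool) : R := if b then 1 else -1.

Definition sgnat (sigma : {ffun 'I_d -> bool}) (n : nat) : R :=
  if (insub n : option 'I_d) is Some i then sgb (sigma i) else 1.

Definition xat (x : 'rV[R]_d) (n : nat) : R :=
  if (insub n : option 'I_d) is Some i then x 0 i else 0.

Definition zk (x : 'rV[R]_d) (k : 'I_d) : R :=
  match val k with
  | 0 => 1
  | 1 => 1 - eps - eps * xat x 0
  | k'.+2 => 1 - eps + eps * gam - eps * (xat x k'.+1 - gam * xat x k')
  end.

Definition Gol : pred 'rV[R]_d := fun x => [forall k, (- zk x k <= x 0 k) && (x 0 k <= zk x k)].

(* Coordinates of the vertex v_sigma, computed recursively: vrec n = (x_n, x_{n-1})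
   where x_n = sigma_n * z_n (the chosen inequality is tight). *)
Fixpoint vrec (sg : nat -> R) (n : nat) : R * R :=
  match n with
  | 0 => (sg 0%N, 0)
  | m.+1 =>
      let ab := vrec sg m in
      ((sg m.+1) * (if m == 0%N then 1 - eps - eps * ab.1
                    else 1 - eps + eps * gam - eps * (ab.1 - gam * ab.2)), ab.1)
  end.

Definition vtx (sigma : {ffun 'I_d -> bool}) : 'rV[R]_d :=
  \row_i (vrec (sgnat sigma) (val i)).1.

Definition wv (k : 'I_d) (s : bool) : 'rV[R]_d :=
  \row_i (match val k with
          | 0 => if val i == val k then sgb s else 0
          | 1 => ((if val i == 0%N then eps else 0) + (if val i == val k then sgb s else 0))
                 / (1 - eps)
          | _ => ((if (val i).+2 == val k then - (eps * gam) else 0)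
                  + (if (val i).+1 == val k then eps else 0)
                  + (if val i == val k then sgb s else 0)) / (1 - eps + eps * gam)
          end).

Definition stretch (t : R) (x : 'rV[R]_d) : 'rV[R]_d :=
  \row_i (if (val i < d - 2)%N then t * x 0 i else x 0 i).

Definition dotv (u x : 'rV[R]_d) : R := \sum_i u 0 i * x 0 i.

Definition DualGol : pred 'rV[R]_d := fun x => [forall tau, dotv (vtx tau) x <= 1].

Definition DualGolL (L : R) (y : 'rV[R]_d) : Prop :=
  exists2 x, DualGol x & y = stretch L x.

End Goldfarb.

From HB Require Import structures.
From mathcomp Require Import all_boot all_order all_algebra.
From mathcomp Require Import ring lra zify.
Set Implicit Arguments. Unset Strict Implicit.
Import Order.TTheory GRing.Theory Num.Theory.
Local Open Scope ring_scope.

(* The vertex w_(k,s) of the dual cube is dual to the facet of the Goldfarb cube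
   given by the k-th inequality, so v_tau^T w_(k,s) = 1 when s = tau_k and, because z_k > 0 at
   every vertex, v_tau^T w_(k,s) < 1 otherwise.  The points w_(k,sigma_k) form a
   triangular basis, so p has unique coordinates alpha on them.  Evaluating
   v_sigma gives sum alpha = 1; evaluating the vertex obtained by flipping
   sigma_k gives 1 - alpha_k (1 - c) < 1 with c < 1, hence alpha_k > 0.
   Finally any convex combination of all the w_(k,s) equal to p satisfies
   sum beta_(k,s) (1 - v_sigma^T w_(k,s)) = 0 with nonnegative terms, so it is
   supported on the w_(k,sigma_k), where the coordinates are unique. *)

Section VertexCoordinates.
Variables (R : realFieldType) (eps gam : R).
Variable sg : nat -> R.
Hypothesis sg_pm : forall n, sg n = 1 \/ sg n = -1.

Definition vcoord n := (vrec eps gam sg n).1.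

Lemma vcoord0 : vcoord 0 = sg 0%N.
Proof. by []. Qed.

Lemma vcoord1 : vcoord 1 = sg 1%N * (1 - eps - eps * vcoord 0).
Proof. by []. Qed.

Lemma vcoordSS m :
  vcoord m.+2 = sg m.+2 * (1 - eps + eps * gam - eps * (vcoord m.+1 - gam * vcoord m)).
Proof. by []. Qed.

(* With z := z_(n+2) at the vertex, v_(n+2) = +-z; the second invariant is what keeps
   z <= 1, and it propagates because 1 - z = eps (1 + v_(n+1)) - eps gam (1 + v_n). *)
Lemma vcoord_bounds :
  0 < gam -> 4 * gam < eps -> eps < 1 / 2 -> forall n,
  [/\ -1 <= vcoord n <= 1, -1 <= vcoord n.+1 <= 1 &
      eps / 2 * (1 + vcoord n) <= 1 + vcoord n.+1].
Proof.
move=> gam_gt0 gam_lt eps_lt; elim=> [|n [/andP[a_ge a_le] /andP[b_ge b_le] ab]].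
  rewrite vcoord1 vcoord0; case: (sg_pm 0%N) => ->; case: (sg_pm 1%N) => ->;
  split; try (apply/andP; split); lra.
rewrite vcoordSS; move: ab a_ge a_le b_ge b_le.
set a := vcoord n; set b := vcoord n.+1 => ab a_ge a_le b_ge b_le.
set z := 1 - eps + eps * gam - eps * (b - gam * a).
have eps_b : 0 <= eps * (1 - b) by apply: mulr_ge0; lra.
have eps_gam_a : 0 <= eps * gam * (1 + a) by rewrite !mulr_ge0 //; lra.
have eps_ab : 0 <= eps * (1 + b - eps / 2 * (1 + a)) by apply: mulr_ge0; lra.
have eps_gam_a' : 0 <= eps * ((eps / 2 - 2 * gam) * (1 + a)) by rewrite !mulr_ge0 //; lra.
have z_ge0 : 0 <= z by rewrite /z; lra.
have z_le1 : z <= 1 by rewrite /z; lra.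
rewrite /z in z_ge0 z_le1 *.
by case: (sg_pm n.+2) => ->; split; try (apply/andP; split); lra.
Qed.

(* v_tau^T w_(k,s) when sg is the sign pattern of tau and s stands for sgb s. *)
Definition facet_dot (k : nat) (s : R) : R :=
  match k with
  | 0 => vcoord 0 * s
  | 1 => (eps * vcoord 0 + vcoord 1 * s) / (1 - eps)
  | m.+2 => (- (eps * gam) * vcoord m + eps * vcoord m.+1 + vcoord m.+2 * s)
            / (1 - eps + eps * gam)
  end.

Lemma facet_dot_tight k :
  0 < gam -> 4 * gam < eps -> eps < 1 / 2 -> facet_dot k (sg k) = 1.
Proof.
move=> gam_gt0 gam_lt eps_lt.
have D_neq0 : 1 - eps + eps * gam != 0 by rewrite lt0r_neq0 // addr_gt0 ?mulr_gt0; lra.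
have E_neq0 : 1 - eps != 0 by rewrite lt0r_neq0 //; lra.
case: k => [|[|m]] /=.
- by rewrite vcoord0; case: (sg_pm 0%N) => ->; ring.
- rewrite vcoord1 -[RHS](mulfV E_neq0); congr (_ / _).
  by case: (sg_pm 1%N) => ->; ring.
- rewrite vcoordSS -[RHS](mulfV D_neq0); congr (_ / _).
  by case: (sg_pm m.+2) => ->; ring.
Qed.

Lemma facet_dot_slack k :
  0 < gam -> 4 * gam < eps -> eps < 1 / 2 -> facet_dot k (- sg k) < 1.
Proof.
move=> gam_gt0 gam_lt eps_lt.
have D_gt0 : 0 < 1 - eps + eps * gam by rewrite addr_gt0 ?mulr_gt0; lra.
case: k => [|[|m]] /=.
- by rewrite vcoord0; case: (sg_pm 0%N) => ->; lra.
- rewrite ltr_pdivrMr ?mul1r ?vcoord1 ?vcoord0; last lra.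
  by case: (sg_pm 1%N) => ->; case: (sg_pm 0%N) => ->; lra.
- rewrite ltr_pdivrMr // mul1r vcoordSS.
  have [/andP[a_ge a_le] /andP[b_ge b_le] _] := vcoord_bounds gam_gt0 gam_lt eps_lt m.
  have eps_b : 0 <= eps * (1 - vcoord m.+1) by apply: mulr_ge0; lra.
  have eps_gam_a : 0 <= eps * gam * (1 + vcoord m) by rewrite !mulr_ge0 //; lra.
  by case: (sg_pm m.+2) => ->; lra.
Qed.

End VertexCoordinates.

Lemma sum_ord_mul_eq (R : pzRingType) d (f : nat -> R) (c : R) n : (n < d)%N ->
  \sum_(i < d) f i * (if val i == n then c else 0) = f n * c.
Proof.
move=> lt_nd; rewrite (bigD1 (Ordinal lt_nd)) //= eqxx big1 ?addr0 // => i ne_in.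
by case: eqP => [ein|]; [case/eqP: ne_in; apply: val_inj | rewrite mulr0].
Qed.

Section Facets.
Variables (R : realFieldType) (d : nat) (eps gam : R).

Lemma sgnat_pm (tau : {ffun 'I_d -> bool}) n : sgnat R tau n = 1 \/ sgnat R tau n = -1.
Proof. by rewrite /sgnat; case: insub => [i|]; [case: (tau i); [left|right]|left]. Qed.

Lemma sgnat_val (tau : {ffun 'I_d -> bool}) (k : 'I_d) : sgnat R tau k = sgb R (tau k).
Proof. by rewrite /sgnat valK. Qed.

Lemma dotv_vtx_wv (tau : {ffun 'I_d -> bool}) k s :
  dotv (vtx eps gam tau) (wv eps gam k s) = facet_dot eps gam (sgnat R tau) k (sgb R s).
Proof.
rewrite /dotv; under eq_bigr => i _ do rewrite !mxE.
case: k => [[|[|m]] lt_kd] /=.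
- exact: (sum_ord_mul_eq (vcoord eps gam (sgnat R tau))).
- under eq_bigr => i _ do rewrite mulrA mulrDr.
  rewrite -mulr_suml big_split /= !(sum_ord_mul_eq (vcoord eps gam (sgnat R tau))) //; last lia.
  by congr (_ / _); ring.
- under eq_bigr => i _ do rewrite !eqSS mulrA !mulrDr.
  rewrite -mulr_suml !big_split /= !(sum_ord_mul_eq (vcoord eps gam (sgnat R tau))) //; try lia.
  by congr (_ / _); ring.
Qed.

Hypotheses (gam_gt0 : 0 < gam) (gam_lt : 4 * gam < eps) (eps_lt : eps < 1 / 2).

Lemma vtx_wv_tight (tau : {ffun 'I_d -> bool}) k :
  dotv (vtx eps gam tau) (wv eps gam k (tau k)) = 1.
Proof.
rewrite dotv_vtx_wv -sgnat_val.
exact: facet_dot_tight (@sgnat_pm tau) _ gam_gt0 gam_lt eps_lt.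
Qed.

Lemma vtx_wv_slack (tau : {ffun 'I_d -> bool}) k s :
  s != tau k -> dotv (vtx eps gam tau) (wv eps gam k s) < 1.
Proof.
move=> ne_s; rewrite dotv_vtx_wv; have -> : sgb R s = - sgnat R tau k.
  by rewrite sgnat_val; move: ne_s; case: s; case: (tau k) => //= _; rewrite opprK.
exact: facet_dot_slack (@sgnat_pm tau) _ gam_gt0 gam_lt eps_lt.
Qed.

End Facets.

Section RowVectors.
Variables (R : realFieldType) (d : nat).

Lemma dotv_sumr (I : Type) (r : seq I) (u : 'rV[R]_d) (f : I -> 'rV[R]_d) :
  dotv u (\sum_(i <- r) f i) = \sum_(i <- r) dotv u (f i).
Proof.
rewrite /dotv; under eq_bigr => j _ do rewrite summxE mulr_sumr.
exact: exchange_big.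
Qed.

Lemma dotvZ (u y : 'rV[R]_d) a : dotv u (a *: y) = a * dotv u y.
Proof. by rewrite /dotv mulr_sumr; apply: eq_bigr => j _; rewrite mxE mulrCA. Qed.

Lemma dotv_stretch (L : R) (u x : 'rV[R]_d) :
  L != 0 -> dotv (stretch L^-1 u) (stretch L x) = dotv u x.
Proof.
move=> L_neq0; apply: eq_bigr => j _; rewrite !mxE.
by case: ifP => _ //; rewrite mulrACA mulVf ?mul1r.
Qed.

Lemma stretch_sum (L : R) (I : Type) (r : seq I) (f : I -> 'rV[R]_d) :
  stretch L (\sum_(i <- r) f i) = \sum_(i <- r) stretch L (f i).
Proof.
apply/rowP => j; rewrite !mxE !summxE mulr_sumr.
by case: ifP => lt_j; apply: eq_bigr => i _; rewrite mxE lt_j.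
Qed.

Lemma stretchZ (L a : R) (y : 'rV[R]_d) : stretch L (a *: y) = a *: stretch L y.
Proof. by apply/rowP => j; rewrite !mxE; case: ifP => _ //; rewrite mulrCA. Qed.

Lemma stretch_inj (L : R) : L != 0 -> injective (stretch (d := d) L).
Proof.
move=> L_neq0 x y /rowP e; apply/rowP => j; have := e j; rewrite !mxE.
by case: ifP => _ //; apply: mulfI.
Qed.

End RowVectors.

Section Decomposition.
Variables (R : realFieldType) (d : nat) (eps gam : R).

Lemma wv_eq0_gt (k j : 'I_d) s : (k < j)%N -> wv eps gam k s 0 j = 0.
Proof.
rewrite mxE; case: j => j lt_jd; case: k => [[|[|m]] lt_kd] /= lt_kj.
- by rewrite ifN //; apply/eqP; lia.
- by rewrite !ifN ?addr0 ?mul0r //; apply/eqP; lia.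
- by rewrite !ifN ?addr0 ?mul0r //; apply/eqP; lia.
Qed.

Lemma wv_diag_neq0 (k : 'I_d) s :
  0 < gam -> 4 * gam < eps -> eps < 1 / 2 -> wv eps gam k s 0 k != 0.
Proof.
move=> gam_gt0 gam_lt eps_lt.
have D_neq0 : 1 - eps + eps * gam != 0 by rewrite lt0r_neq0 // addr_gt0 ?mulr_gt0; lra.
have E_neq0 : 1 - eps != 0 by rewrite lt0r_neq0 //; lra.
have sgb_neq0 : sgb R s != 0 by case: s; rewrite /= ?oppr_eq0 oner_eq0.
rewrite mxE; case: k => [[|[|m]] lt_kd] /=; rewrite ?eqxx //.
- by rewrite add0r mulf_neq0 ?invr_eq0.
- by rewrite !ifN ?add0r ?mulf_neq0 ?invr_eq0 //; apply/eqP; lia.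
Qed.

Variable sigma : {ffun 'I_d -> bool}.

Definition tight_mx : 'M[R]_d := \matrix_(k, j) wv eps gam k (sigma k) 0 j.

Lemma mul_tight_mx (a : 'rV[R]_d) :
  a *m tight_mx = \sum_k a 0 k *: wv eps gam k (sigma k).
Proof.
rewrite mulmx_sum_row; apply: eq_bigr => k _.
by congr (_ *: _); apply/rowP => j; rewrite !mxE.
Qed.

Lemma tight_mx_unit :
  0 < gam -> 4 * gam < eps -> eps < 1 / 2 -> tight_mx \in unitmx.
Proof.
move=> gam_gt0 gam_lt eps_lt; rewrite unitmxE unitfE det_trig.
  by apply/prodf_neq0 => k _; rewrite mxE wv_diag_neq0.
by apply/forallP => k; apply/forallP => j; apply/implyP => lt_kj; rewrite mxE wv_eq0_gt.
Qed.

Definition tight_coord (x : 'rV[R]_d) (k : 'I_d) : R := (x *m invmx tight_mx) 0 k.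

Section TightCoordinates.
Hypotheses (gam_gt0 : 0 < gam) (gam_lt : 4 * gam < eps) (eps_lt : eps < 1 / 2).

Lemma tight_coordK x : \sum_k tight_coord x k *: wv eps gam k (sigma k) = x.
Proof. by rewrite -mul_tight_mx mulmxKV // tight_mx_unit. Qed.

Lemma tight_coord_unique (a : 'I_d -> R) x :
  \sum_k a k *: wv eps gam k (sigma k) = x -> forall k, a k = tight_coord x k.
Proof.
move=> <- k; have -> : \sum_k a k *: wv eps gam k (sigma k) = \row_j a j *m tight_mx.
  by rewrite mul_tight_mx; apply: eq_bigr => j _; rewrite mxE.
by rewrite /tight_coord mulmxK ?tight_mx_unit // mxE.
Qed.

Lemma dotv_vtx_tight x : dotv (vtx eps gam sigma) x = \sum_k tight_coord x k.
Proof.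
rewrite -{1}(tight_coordK x) dotv_sumr; apply: eq_bigr => k _.
by rewrite dotvZ vtx_wv_tight ?mulr1.
Qed.

Definition flip_sign (k : 'I_d) : {ffun 'I_d -> bool} :=
  [ffun j => if j == k then ~~ sigma k else sigma j].

Lemma flip_sign_neq k : flip_sign k != sigma.
Proof. by apply/eqP => /ffunP /(_ k); rewrite ffunE eqxx; case: (sigma k). Qed.

Lemma tight_coord_gt0 x k :
  dotv (vtx eps gam sigma) x = 1 -> dotv (vtx eps gam (flip_sign k)) x < 1 ->
  0 < tight_coord x k.
Proof.
move=> on_sigma.
have c_lt1 : dotv (vtx eps gam (flip_sign k)) (wv eps gam k (sigma k)) < 1.
  by apply: vtx_wv_slack => //; rewrite ffunE eqxx; case: (sigma k).
have -> : dotv (vtx eps gam (flip_sign k)) x =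
    dotv (vtx eps gam (flip_sign k)) (\sum_j tight_coord x j *: wv eps gam j (sigma j)).
  by rewrite tight_coordK.
rewrite dotv_sumr (bigD1 k) //= dotvZ (eq_bigr (tight_coord x)) => [|j ne_jk].
  move: on_sigma; rewrite dotv_vtx_tight (bigD1 k) //=.
  move: c_lt1; set c := dotv _ _; set r := \sum_(j | _) _ => c_lt1 sum1 lt1; nra.
have -> : sigma j = flip_sign k j by rewrite ffunE (negbTE ne_jk).
by rewrite dotvZ vtx_wv_tight ?mulr1.
Qed.

Lemma convex_comb_tight_support (beta : 'I_d -> bool -> R) :
  (forall k s, 0 <= beta k s) -> \sum_k \sum_s beta k s = 1 ->
  dotv (vtx eps gam sigma) (\sum_k \sum_s beta k s *: wv eps gam k s) = 1 ->
  forall k s, s != sigma k -> beta k s = 0.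
Proof.
move=> beta_ge0 sum_beta dot1 k s ne_s.
pose gap k s := beta k s * (1 - dotv (vtx eps gam sigma) (wv eps gam k s)).
have gap_ge0 k' s' : 0 <= gap k' s'.
  apply: mulr_ge0 => //; rewrite subr_ge0; have [->|ne_s'] := eqVneq s' (sigma k').
    by rewrite vtx_wv_tight.
  exact/ltW/vtx_wv_slack.
have sum_gap : \sum_k \sum_s gap k s = 0.
  under eq_bigr => k' _ do under eq_bigr => s' _ do rewrite /gap mulrBr mulr1.
  under eq_bigr => k' _ do rewrite sumrB.
  rewrite sumrB sum_beta -dot1 dotv_sumr; apply/eqP; rewrite subr_eq0; apply/eqP.
  by apply: eq_bigr => k' _; rewrite dotv_sumr; apply: eq_bigr => s' _; rewrite dotvZ.
have := psumr_eq0P (fun k' _ => sumr_ge0 _ (fun s' _ => gap_ge0 k' s')) sum_gap (i := k) isT.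
move/(psumr_eq0P (fun s' _ => gap_ge0 k s'))/(_ s isT)/eqP.
rewrite mulf_eq0 subr_eq0 => /orP[/eqP //|/eqP dot_eq1].
by have := vtx_wv_slack gam_gt0 gam_lt eps_lt ne_s; rewrite -dot_eq1 ltxx.
Qed.

Lemma convex_comb_tight (beta : 'I_d -> bool -> R) :
  (forall k s, s != sigma k -> beta k s = 0) ->
  \sum_k \sum_s beta k s *: wv eps gam k s = \sum_k beta k (sigma k) *: wv eps gam k (sigma k).
Proof.
move=> beta0; apply: eq_bigr => k _; rewrite (bigD1 (sigma k)) //= big1 ?addr0 // => s ne_s.
by rewrite beta0 ?scale0r.
Qed.

End TightCoordinates.

End Decomposition.

Unset Implicit Arguments.

Theorem lemma5 (R : realFieldType) (d : nat) (eps gam L : R)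
  (sigma : {ffun 'I_d -> bool}) (p : 'rV[R]_d) :
  (2 <= d)%N -> 0 < 4 * gam -> 4 * gam < eps -> eps < 1 / 2 -> 0 < L ->
  DualGolL eps gam L p ->
  dotv (stretch L^-1 (vtx eps gam sigma)) p = 1 ->
  (forall tau : {ffun 'I_d -> bool}, tau != sigma ->
     dotv (stretch L^-1 (vtx eps gam tau)) p < 1) ->
  exists alpha : 'I_d -> R,
    [/\ (forall k, 0 < alpha k),
        \sum_k alpha k = 1,
        p = \sum_k alpha k *: stretch L (wv eps gam k (sigma k)) &
        (forall beta : 'I_d -> bool -> R,
           (forall k s, 0 <= beta k s) ->
           \sum_k \sum_s beta k s = 1 ->
           p = \sum_k \sum_s beta k s *: stretch L (wv eps gam k s) ->
           forall k s, beta k s = (if s == sigma k then alpha k else 0))].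
Proof.
move=> _ gam4_gt0 gam_lt eps_lt L_gt0 [x _ ->] on_sigma below_tau.
have gam_gt0 : 0 < gam by lra.
have L_neq0 : L != 0 by rewrite lt0r_neq0.
rewrite dotv_stretch // in on_sigma.
have x_tight := tight_coordK sigma gam_gt0 gam_lt eps_lt x.
exists (tight_coord eps gam sigma x); split.
- move=> k; apply: tight_coord_gt0 => //.
  by rewrite -(dotv_stretch _ _ L_neq0); apply/below_tau/flip_sign_neq.
- by rewrite -(dotv_vtx_tight sigma gam_gt0 gam_lt eps_lt).
- by rewrite -{1}x_tight stretch_sum; apply: eq_bigr => k _; rewrite stretchZ.
move=> beta beta_ge0 sum_beta x_beta.
have {}x_beta : x = \sum_k \sum_s beta k s *: wv eps gam k s.
  apply: (stretch_inj L_neq0); rewrite x_beta stretch_sum; apply: eq_bigr => k _.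
  by rewrite stretch_sum; apply: eq_bigr => s _; rewrite stretchZ.
have beta_off : forall k s, s != sigma k -> beta k s = 0.
  by apply: (convex_comb_tight_support gam_gt0 gam_lt eps_lt beta_ge0 sum_beta); rewrite -x_beta.
move=> k s; case: eqP => [->|/eqP]; last exact: beta_off.
have x_tight_beta : \sum_j beta j (sigma j) *: wv eps gam j (sigma j) = x.
  by rewrite x_beta (convex_comb_tight eps gam beta_off).
exact: (tight_coord_unique gam_gt0 gam_lt eps_lt x_tight_beta).
Qed.
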